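(* Let $U\in\mathbb{R}^{n\times d}$, let $\mathbf{x}_*\in\mathbb{R}^d$ be an $s$-sparse signal, and let $\mathbf{y}=U\mathbf{x}_*$ (noiseless measurements). Assume $U$ satisfies \[ \gamma := \delta_s + \sqrt{2}\,\theta_{s,s} + \delta_{3s} < 1 . \] Let $\Delta_1,\Delta_2,\ldots$ be a sequence with $\|\mathbf{x}_1-\mathbf{x}_*\|_2\le \Delta_1$ and $\Delta_{t+1} = (\delta_s+\sqrt{2}\theta_{s,s}+\delta_{3s})\Delta_t$. If Algorithm 1 is run with $\lambda_t = \frac{\delta_s+\sqrt{2}\theta_{s,s}}{\sqrt{s}}\Delta_t$, then for all $t\ge 0$: (i) $|\mathcal{S}_{t+1}\setminus \mathcal{S}_*|\le s$, and (ii) $\|\mathbf{x}_{t+1}-\mathbf{x}_*\|_2\le \gamma^t\Delta_1$.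
   Context: For $\mathbf{x}\in\mathbb{R}^d$, $\mathcal{S}(\mathbf{x})=\{i:[\mathbf{x}]_i\neq 0\}$ is its support; $\mathbf{x}$ is $s$-sparse if $|\mathcal{S}(\mathbf{x})|\le s$. For $\mathcal T\subseteq\{1,\dots,d\}$, $U_{\mathcal T}$ is the submatrix of $U$ with columns indexed by $\mathcal T$. The restricted isometry constant $\delta_s\ge0$ is the smallest constant such that for every $\mathcal T$ with $|\mathcal T|\le s$ and every $\mathbf{v}\in\mathbb{R}^{|\mathcal T|}$, $(1-\delta_s)\|\mathbf{v}\|_2^2\le\|U_{\mathcal T}\mathbf{v}\|_2^2\le(1+\delta_s)\|\mathbf{v}\|_2^2$. The restricted orthogonality constant $\theta_{s,s}$ (with $2s\le d$) is the smallest constant such that for all disjoint $\mathcal T,\mathcal T'$ with $|\mathcal T|,|\mathcal T'|\le s$ and all $\mathbf{v}\in\mathbb{R}^{|\mathcal T|},\mathbf{v}'\in\mathbb{R}^{|\mathcal T'|}$, $|\langle U_{\mathcal T}\mathbf{v},U_{\mathcal T'}\mathbf{v}'\rangle|\le\theta_{s,s}\|\mathbf{v}\|_2\|\mathbf{v}'\|_2$. Algorithm 1 (homotopy proximal mapping): given $U$, $\mathbf{y}$ and parameters $\lambda_1,\lambda_2,\ldots>0$, set $\mathbf{x}_1=0$ and for $t=1,2,\ldots$ compute $\widehat{\mathbf{x}}_t=\mathbf{x}_t-U^\top(U\mathbf{x}_t-\mathbf{y})$ and $\mathbf{x}_{t+1}=\mathrm{sign}(\widehat{\mathbf{x}}_t)[|\widehat{\mathbf{x}}_t|-\lambda_t]_+$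 (componentwise soft-thresholding; equivalently $\mathbf{x}_{t+1}=\arg\min_{\mathbf{x}}\frac12\|\mathbf{x}-\widehat{\mathbf{x}}_t\|_2^2+\lambda_t\|\mathbf{x}\|_1$). $\mathcal{S}_t=\mathcal{S}(\mathbf{x}_t)$ and $\mathcal{S}_*=\mathcal{S}(\mathbf{x}_* )$. *)

From HB Require Import structures.
From mathcomp Require Import all_boot all_order all_algebra.
From mathcomp Require Import reals.
Set Implicit Arguments. Unset Strict Implicit. Unset Printing Implicit Defensive.
Import Order.TTheory GRing.Theory Num.Theory.
Local Open Scope ring_scope.

Section Defs.
Variable R : realType.

Definition sqnorm m (v : 'cV[R]_m) : R := \sum_(i < m) v i 0 ^+ 2.
Definition norm2 m (v : 'cV[R]_m) : R := Num.sqrt (sqnorm v).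
Definition dotv m (a b : 'cV[R]_m) : R := \sum_(i < m) a i 0 * b i 0.

Definition supp d (x : 'cV[R]_d) : {set 'I_d} := [set i | x i 0 != 0].

(* U_T : the submatrix of U with columns indexed by T (in increasing order) *)
Definition colsubT n d (U : 'M[R]_(n, d)) (T : {set 'I_d}) : 'M[R]_(n, #|T|) :=
  colsub (fun k : 'I_#|T| => enum_val k) U.

Definition rip_ok n d (U : 'M[R]_(n, d)) (s : nat) (delta : R) : Prop :=
  0 <= delta /\
  forall T : {set 'I_d}, (#|T| <= s)%N ->
    forall v : 'cV[R]_#|T|,
      (1 - delta) * sqnorm v <= sqnorm (colsubT U T *m v) /\
      sqnorm (colsubT U T *m v) <= (1 + delta) * sqnorm v.

Definition is_RIC n d (U : 'M[R]_(n, d)) (s : nat) (delta : R) : Prop :=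
  rip_ok U s delta /\ forall delta', rip_ok U s delta' -> delta <= delta'.

Definition roc_ok n d (U : 'M[R]_(n, d)) (s : nat) (theta : R) : Prop :=
  0 <= theta /\
  forall T T' : {set 'I_d}, (#|T| <= s)%N -> (#|T'| <= s)%N -> [disjoint T & T'] ->
    forall (v : 'cV[R]_#|T|) (v' : 'cV[R]_#|T'|),
      `| dotv (colsubT U T *m v) (colsubT U T' *m v') | <= theta * norm2 v * norm2 v'.

Definition is_ROC n d (U : 'M[R]_(n, d)) (s : nat) (theta : R) : Prop :=
  roc_ok U s theta /\ forall theta', roc_ok U s theta' -> theta <= theta'.

Definition soft d (x : 'cV[R]_d) (lam : R) : 'cV[R]_d :=
  \col_i (Num.sg (x i 0) * Num.max (`|x i 0| - lam) 0).

Definition hpm_step n d (U : 'M[R]_(n, d)) (y : 'cV[R]_n) (lam : R) (x : 'cV[R]_d)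
  : 'cV[R]_d := soft (x - U^T *m (U *m x - y)) lam.

(* Algorithm 1 with paper indexing: hpm 1 = x_1 = 0 and
   hpm (t+1) = x_{t+1} computed with lambda_t = lam t, for t >= 1.
   (hpm 0 := 0 is a dummy value, never used in the statement.) *)
Fixpoint hpm n d (U : 'M[R]_(n, d)) (y : 'cV[R]_n) (lam : nat -> R) (t : nat)
  : 'cV[R]_d :=
  match t with
  | 0 => 0
  | 1 => 0
  | t'.+1 => hpm_step U y (lam t') (hpm U y lam t')
  end.

End Defs.

(* Let e = x_t - x_* and w = e - U^T U e, so that x_t - U^T (U x_t - y) = x_* + w.
   Off S_*, x_{t+1} is nonzero only where |w_i| > lambda_t. If s such indices existed, they
   would form a set T disjoint from S_* with ||w_T|| > sqrt(s) lambda_t; but splitting e along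
   T, S_* and the rest of its support, and using delta_s on T and theta_{s,s} on the other
   two pieces, gives ||w_T|| <= (delta_s + sqrt 2 theta_{s,s}) ||e|| <= sqrt(s) lambda_t. Next, e' = x_{t+1} - x_* and e live on a set of at most 3s indices and
   ||e'||^2 = (<e', e> - <U e', U e>) + <e', x_{t+1} - x_* - w>. The first term is at most
   delta_{3s} ||e'|| ||e||. Soft thresholding moves each entry by at most lambda_t and
   towards 0, so in the second term the entries off S_* contribute <= 0 and those on S_*
   at most lambda_t |e'_i|, in all at most sqrt(s) lambda_t ||e'||. Hence
   ||e'|| <= delta_{3s} ||e|| + sqrt(s) lambda_t = gamma Delta_t, and (ii) follows by
   induction. *)

From HB Require Import structures.
From mathcomp Require Import all_boot all_order all_algebra.
From mathcomp Require Import reals ring lra zify.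
Import Order.TTheory GRing.Theory Num.Theory.
Local Open Scope ring_scope.
Set Implicit Arguments.
Unset Strict Implicit.
Unset Printing Implicit Defensive.

Lemma subset_of_card (T : finType) (A : {set T}) k :
  (k <= #|A|)%N -> exists2 B : {set T}, B \subset A & #|B| = k.
Proof.
move=> /card_geqP[r [r_uniq r_size rA]]; exists [set i in r].
  by apply/subsetP => i; rewrite inE => /rA.
by rewrite cardsE (card_uniqP r_uniq) r_size.
Qed.

Section Vectors.
Variable R : realType.
Implicit Types (m d : nat).

Lemma dotvC m (a b : 'cV[R]_m) : dotv a b = dotv b a.
Proof. by apply: eq_bigr => i _; rewrite mulrC. Qed.

Lemma dotvDl m (a b c : 'cV[R]_m) : dotv (a + b) c = dotv a c + dotv b c.
Proof. by rewrite /dotv -big_split; apply: eq_bigr => i _; rewrite mxE mulrDl. Qed.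

Lemma dotvZl m k (a b : 'cV[R]_m) : dotv (k *: a) b = k * dotv a b.
Proof. by rewrite /dotv mulr_sumr; apply: eq_bigr => i _; rewrite mxE mulrA. Qed.

Lemma dotvNl m (a b : 'cV[R]_m) : dotv (- a) b = - dotv a b.
Proof. by rewrite -scaleN1r dotvZl mulN1r. Qed.

Lemma dotvBl m (a b c : 'cV[R]_m) : dotv (a - b) c = dotv a c - dotv b c.
Proof. by rewrite dotvDl dotvNl. Qed.

Lemma dotvDr m (a b c : 'cV[R]_m) : dotv c (a + b) = dotv c a + dotv c b.
Proof. by rewrite dotvC dotvDl !(dotvC c). Qed.

Lemma dotvBr m (a b c : 'cV[R]_m) : dotv c (a - b) = dotv c a - dotv c b.
Proof. by rewrite dotvC dotvBl !(dotvC c). Qed.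

Lemma dotvZr m k (a b : 'cV[R]_m) : dotv a (k *: b) = k * dotv a b.
Proof. by rewrite dotvC dotvZl dotvC. Qed.

Lemma dotv0l m (b : 'cV[R]_m) : dotv 0 b = 0.
Proof. by rewrite -(scale0r 0) dotvZl mul0r. Qed.

Lemma dotv0r m (b : 'cV[R]_m) : dotv b 0 = 0.
Proof. by rewrite dotvC dotv0l. Qed.

Lemma dotv_trmx n d (U : 'M[R]_(n, d)) (a : 'cV[R]_d) (b : 'cV[R]_n) :
  dotv a (U^T *m b) = dotv (U *m a) b.
Proof.
rewrite /dotv; under eq_bigr => i _ do rewrite mxE mulr_sumr.
rewrite exchange_big; apply: eq_bigr => j _.
by rewrite mxE mulr_suml; apply: eq_bigr => i _; rewrite !mxE; ring.
Qed.

Lemma sqnormE m (a : 'cV[R]_m) : sqnorm a = dotv a a.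
Proof. by apply: eq_bigr => i _; rewrite expr2. Qed.

Lemma sqnorm_ge0 m (a : 'cV[R]_m) : 0 <= sqnorm a.
Proof. by apply: sumr_ge0 => i _; rewrite sqr_ge0. Qed.

Lemma norm2_ge0 m (a : 'cV[R]_m) : 0 <= norm2 a.
Proof. exact: sqrtr_ge0. Qed.

Lemma sqr_norm2 m (a : 'cV[R]_m) : norm2 a ^+ 2 = sqnorm a.
Proof. by rewrite sqr_sqrtr // sqnorm_ge0. Qed.

Lemma norm2_eq0 m (a : 'cV[R]_m) : norm2 a = 0 -> a = 0.
Proof.
move=> /eqP; rewrite sqrtr_eq0 => a_le0.
have /psumr_eq0P a0 : sqnorm a = 0 by apply/eqP; rewrite eq_le a_le0 sqnorm_ge0.
apply/matrixP => i j; rewrite [j]ord1 mxE.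
by apply/eqP; rewrite -sqrf_eq0; apply/eqP/a0 => // k _; apply: sqr_ge0.
Qed.

Lemma ler_of_sqr_le_mul (p K : R) : 0 <= p -> 0 <= K -> p ^+ 2 <= p * K -> p <= K.
Proof. by move=> *; nra. Qed.

Lemma sqr_sum_le m (A : {set 'I_m}) (F : 'I_m -> R) :
  (\sum_(i in A) F i) ^+ 2 <= #|A|%:R * \sum_(i in A) F i ^+ 2.
Proof.
set S := \sum_(i in A) F i ^+ 2.
rewrite expr2 mulr_suml; under eq_bigr => i _ do rewrite mulr_sumr.
apply: (@le_trans _ _ (\sum_(i in A) \sum_(j in A) (F i ^+ 2 / 2 + F j ^+ 2 / 2))).
  apply: ler_sum => i _; apply: ler_sum => j _.
  by have := sqr_ge0 (F i - F j); rewrite !expr2; lra.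
under eq_bigr => i _ do rewrite big_split /= sumr_const -mulr_suml -/S.
rewrite big_split /= sumr_const sumrMnl -mulr_suml -/S.
by rewrite -mulrnDl -splitr mulr_natl.
Qed.

Lemma supp_subset_eq0 d (x : 'cV[R]_d) (W : {set 'I_d}) i :
  supp x \subset W -> i \notin W -> x i 0 = 0.
Proof.
move=> /subsetP sxW iW; apply/eqP; apply: contraNT iW => xi0.
by apply: sxW; rewrite inE.
Qed.

Lemma supp_subsetD d (W : {set 'I_d}) (a b : 'cV[R]_d) :
  supp a \subset W -> supp b \subset W -> supp (a + b) \subset W.
Proof.
move=> saW sbW; apply/subsetP => i; rewrite inE mxE; apply: contraNT => iW.
by rewrite (supp_subset_eq0 saW) // (supp_subset_eq0 sbW) // addr0.
Qed.

Lemma supp_subsetZ d (W : {set 'I_d}) k (a : 'cV[R]_d) :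
  supp a \subset W -> supp (k *: a) \subset W.
Proof.
move=> saW; apply/subsetP => i; rewrite inE mxE; apply: contraNT => iW.
by rewrite (supp_subset_eq0 saW) // mulr0.
Qed.

Lemma suppB_subset d (x y : 'cV[R]_d) :
  supp (x - y) \subset supp y :|: (supp x :\: supp y).
Proof.
apply/subsetP => i; rewrite !inE mxE [(- y) i 0]mxE.
by have [->|//] := eqVneq (y i 0) 0; rewrite subr0.
Qed.

Lemma dotv_disjoint_supp d (A B : {set 'I_d}) (a b : 'cV[R]_d) :
  supp a \subset A -> supp b \subset B -> [disjoint A & B] -> dotv a b = 0.
Proof.
move=> saA sbB dAB; rewrite /dotv big1 // => i _.
have [iA|iA] := boolP (i \in A); last by rewrite (supp_subset_eq0 saA) // mul0r.
by rewrite (supp_subset_eq0 sbB) ?mulr0 // (disjointFr dAB iA).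
Qed.

Definition restr d (W : {set 'I_d}) (x : 'cV[R]_d) : 'cV[R]_d :=
  \col_i (if i \in W then x i 0 else 0).

Lemma supp_restr d (W : {set 'I_d}) x : supp (restr W x) \subset W.
Proof. by apply/subsetP => i; rewrite inE mxE; case: ifP => // _; rewrite eqxx. Qed.

Lemma sqnorm_restr d (A : {set 'I_d}) x :
  sqnorm (restr A x) = \sum_(i in A) x i 0 ^+ 2.
Proof.
rewrite /sqnorm [RHS]big_mkcond; apply: eq_bigr => i _; rewrite mxE.
by case: ifP; rewrite ?expr0n.
Qed.

Lemma dotv_restr d (W : {set 'I_d}) x : dotv (restr W x) x = sqnorm (restr W x).
Proof.
rewrite /dotv /sqnorm; apply: eq_bigr => i _; rewrite !mxE.
by case: ifP; rewrite ?mul0r ?expr0n // expr2.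
Qed.

Lemma restrU d (A B : {set 'I_d}) x : [disjoint A & B] ->
  restr (A :|: B) x = restr A x + restr B x.
Proof.
move=> dAB; apply/matrixP => i j; rewrite !mxE in_setU.
have [iA|iA] /= := boolP (i \in A); last by rewrite add0r.
by rewrite (disjointFr dAB iA) addr0.
Qed.

Lemma restr_id d (W : {set 'I_d}) x : supp x \subset W -> restr W x = x.
Proof.
move=> sxW; apply/matrixP => i j; rewrite [j]ord1 mxE.
by case: ifPn => // /(supp_subset_eq0 sxW) ->.
Qed.

Lemma sqnorm_restrU_le d (A B : {set 'I_d}) x : [disjoint A & B] ->
  sqnorm (restr A x) + sqnorm (restr B x) <= sqnorm x.
Proof.
move=> dAB; rewrite /sqnorm -big_split; apply: ler_sum => i _; rewrite !mxE.
case: ifP => iA; last by case: ifP; rewrite expr0n /= ?add0r ?addr0 ?sqr_ge0.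
by rewrite (disjointFr dAB iA) expr0n /= addr0.
Qed.

Lemma norm2_restr_le d (A : {set 'I_d}) x : norm2 (restr A x) <= norm2 x.
Proof.
rewrite /norm2 ler_sqrt ?sqnorm_ge0 //.
have dA0 : [disjoint A & set0] by rewrite disjoints_subset setC0 subsetT.
by have := sqnorm_restrU_le x dA0; have := sqnorm_ge0 (restr set0 x); lra.
Qed.

Definition subvec d (T : {set 'I_d}) (x : 'cV[R]_d) : 'cV[R]_#|T| :=
  \col_k x (enum_val k) 0.

Lemma sum_enum_val d (T : {set 'I_d}) (F : 'I_d -> R) :
  (forall i, i \notin T -> F i = 0) ->
  \sum_(k < #|T|) F (enum_val k) = \sum_i F i.
Proof.
move=> FT0; rewrite -(big_enum_val F) [RHS](bigID (mem T)) /=.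
by rewrite [X in _ = _ + X]big1 ?addr0 // => i /FT0.
Qed.

Lemma colsubT_mul_subvec n d (U : 'M[R]_(n, d)) (T : {set 'I_d}) x :
  supp x \subset T -> colsubT U T *m subvec T x = U *m x.
Proof.
move=> sxT; apply/matrixP => i j; rewrite [j]ord1 !mxE.
under eq_bigr => k _ do rewrite !mxE.
by apply: sum_enum_val => l /(supp_subset_eq0 sxT) ->; rewrite mulr0.
Qed.

Lemma sqnorm_subvec d (T : {set 'I_d}) x :
  supp x \subset T -> sqnorm (subvec T x) = sqnorm x.
Proof.
move=> sxT; rewrite /sqnorm; under eq_bigr => k _ do rewrite mxE.
by apply: sum_enum_val => l /(supp_subset_eq0 sxT) ->; rewrite expr0n.
Qed.

Lemma norm2_subvec d (T : {set 'I_d}) x :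
  supp x \subset T -> norm2 (subvec T x) = norm2 x.
Proof. by move=> sxT; rewrite /norm2 sqnorm_subvec. Qed.

Section RestrictedIsometry.
Variables (n d k : nat) (U : 'M[R]_(n, d)).

Lemma rip_ok_sqnorm delta : rip_ok U k delta ->
  forall (W : {set 'I_d}) x, (#|W| <= k)%N -> supp x \subset W ->
  `|dotv x x - dotv (U *m x) (U *m x)| <= delta * sqnorm x.
Proof.
case=> _ rip W x Wk sxW; have := rip W Wk (subvec W x).
rewrite colsubT_mul_subvec // sqnorm_subvec // -!sqnormE => -[lb ub].
by rewrite ler_norml; apply/andP; split; lra.
Qed.

Lemma roc_ok_dotv theta : roc_ok U k theta ->
  forall (T T' : {set 'I_d}) x x', (#|T| <= k)%N -> (#|T'| <= k)%N ->
  [disjoint T & T'] -> supp x \subset T -> supp x' \subset T' ->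
  `|dotv (U *m x) (U *m x')| <= theta * norm2 x * norm2 x'.
Proof.
case=> _ roc T T' x x' Tk T'k dTT' sxT sx'T'.
have := roc T T' Tk T'k dTT' (subvec T x) (subvec T' x').
by rewrite !colsubT_mul_subvec // !norm2_subvec.
Qed.

Lemma rip_ok_dotv delta : rip_ok U k delta ->
  forall (W : {set 'I_d}) u v, (#|W| <= k)%N ->
  supp u \subset W -> supp v \subset W ->
  `|dotv u v - dotv (U *m u) (U *m v)| <= delta * norm2 u * norm2 v.
Proof.
move=> rip W u v Wk suW svW; have delta0 : 0 <= delta by case: rip.
have [u0|unz] := eqVneq (norm2 u) 0.
  by rewrite (norm2_eq0 u0) mulmx0 !dotv0l subrr normr0 !mulr_ge0 ?norm2_ge0.
have [v0|vnz] := eqVneq (norm2 v) 0.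
  by rewrite (norm2_eq0 v0) mulmx0 !dotv0r subrr normr0 !mulr_ge0 ?norm2_ge0.
have p_gt0 : 0 < norm2 u by rewrite lt_def unz norm2_ge0.
have q_gt0 : 0 < norm2 v by rewrite lt_def vnz norm2_ge0.
set p := norm2 u in p_gt0 *; set q := norm2 v in q_gt0 *.
pose B a b := dotv a b - dotv (U *m a) (U *m b).
(* rescaling to equal norms makes polarization give the product of the norms *)
pose u1 := q *: u; pose v1 := p *: v.
have B_scale : B u1 v1 = q * p * B u v.
  by rewrite /B /u1 /v1 -!scalemxAr !dotvZl !dotvZr; ring.
have B_polar : 4 * B u1 v1 = B (u1 + v1) (u1 + v1) - B (u1 - v1) (u1 - v1).
  rewrite /B mulmxDr mulmxBr !dotvBl !dotvBr !dotvDl !dotvDr (dotvC v1 u1).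
  by rewrite (dotvC (U *m v1) (U *m u1)); ring.
have parallelogram : sqnorm (u1 + v1) + sqnorm (u1 - v1) = 2 * (sqnorm u1 + sqnorm v1).
  by rewrite !sqnormE !dotvBl !dotvBr !dotvDl !dotvDr (dotvC v1 u1); ring.
have nu1 : sqnorm u1 = q ^+ 2 * p ^+ 2.
  by rewrite sqnormE dotvZl dotvZr -sqnormE -sqr_norm2 -/p; ring.
have nv1 : sqnorm v1 = q ^+ 2 * p ^+ 2.
  by rewrite sqnormE dotvZl dotvZr -sqnormE -sqr_norm2 -/q; ring.
have Bplus := rip_ok_sqnorm rip Wk (supp_subsetD (supp_subsetZ q suW) (supp_subsetZ p svW)).
have Bminus := rip_ok_sqnorm rip Wk
  (supp_subsetD (supp_subsetZ q suW) (supp_subsetZ (- 1) (supp_subsetZ p svW))).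
rewrite scaleN1r in Bminus.
have : q * p * `|B u v| <= q * p * (delta * p * q).
  have : `|4 * B u1 v1| <= delta * (sqnorm (u1 + v1) + sqnorm (u1 - v1)).
    by rewrite B_polar mulrDr; apply: le_trans (ler_normB _ _) (lerD Bplus Bminus).
  rewrite B_scale parallelogram nu1 nv1 !normrM normr_nat (gtr0_norm q_gt0) (gtr0_norm p_gt0).
  by lra.
by rewrite ler_pM2l ?mulr_gt0.
Qed.

End RestrictedIsometry.

Lemma sum_abs_le_sqrt_card d (A : {set 'I_d}) (x : 'cV[R]_d) :
  \sum_(i in A) `|x i 0| <= Num.sqrt #|A|%:R * norm2 x.
Proof.
rewrite -ler_sqr ?nnegrE ?sumr_ge0 ?mulr_ge0 ?sqrtr_ge0 ?norm2_ge0 //.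
apply: le_trans (sqr_sum_le _ _) _.
rewrite exprMn sqr_sqrtr ?ler0n // sqr_norm2 ler_wpM2l ?ler0n //.
rewrite [X in _ <= X](bigID (mem A)) /= -[X in X <= _]addr0 lerD ?sumr_ge0 //.
  by apply: ler_sum => i _; rewrite real_normK // num_real.
by move=> i _; apply: sqr_ge0.
Qed.

Lemma norm2_restrD_le d (A B : {set 'I_d}) x : [disjoint A & B] ->
  norm2 (restr A x) + norm2 (restr B x) <= Num.sqrt 2 * norm2 x.
Proof.
move=> dAB; rewrite -ler_sqr ?nnegrE ?addr_ge0 ?mulr_ge0 ?sqrtr_ge0 ?norm2_ge0 //.
rewrite exprMn sqr_sqrtr // !sqr_norm2.
have := sqnorm_restrU_le x dAB; rewrite -!sqr_norm2.
by have := sqr_ge0 (norm2 (restr A x) - norm2 (restr B x)); lra.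
Qed.

Definition softr (a l : R) := Num.sg a * Num.max (`|a| - l) 0.

Lemma softrP (a l : R) (P : R -> Prop) :
  (a = 0 -> P 0) ->
  (0 < a -> a <= l -> P 0) -> (0 < a -> l < a -> P (a - l)) ->
  (a < 0 -> - a <= l -> P 0) -> (a < 0 -> l < - a -> P (a + l)) ->
  P (softr a l).
Proof.
move=> Pa0 Ppos0 Ppos Pneg0 Pneg; rewrite /softr maxEle.
have [a0|a0|a0] := ltgtP a 0; last by rewrite a0 sgr0 mul0r; apply: Pa0.
- rewrite ltr0_sg // ltr0_norm //; case: ifP => al.
    by rewrite mulr0; apply: Pneg0 => //; lra.
  have -> : -1 * (- a - l) = a + l by ring.
  by apply: Pneg => //; move/negbT: al; rewrite -ltNge; lra.
- rewrite gtr0_sg // gtr0_norm //; case: ifP => al.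
    by rewrite mulr0; apply: Ppos0 => //; lra.
  by rewrite mul1r; apply: Ppos => //; move/negbT: al; rewrite -ltNge; lra.
Qed.

Lemma softr_neq0 (a l : R) : softr a l != 0 -> l < `|a|.
Proof.
apply: (@softrP a l (fun z => z != 0 -> l < `|a|)); rewrite ?eqxx //.
- by move=> a_gt0 *; rewrite gtr0_norm.
- by move=> a_lt0 *; rewrite ltr0_norm.
Qed.

Lemma softr_mul_sub_le0 (a l : R) : 0 <= l -> softr a l * (softr a l - a) <= 0.
Proof.
move=> l_ge0; apply: (@softrP a l (fun z => z * (z - a) <= 0)) => *;
  by rewrite ?mul0r //; nra.
Qed.

Lemma softr_sub_le (a l : R) : 0 <= l -> `|softr a l - a| <= l.
Proof.
move=> l_ge0; apply: (@softrP a l (fun z => `|z - a| <= l)).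
- by move=> ->; rewrite subrr normr0.
- by move=> *; rewrite sub0r normrN gtr0_norm.
- by move=> *; rewrite addrC addKr normrN ger0_norm.
- by move=> *; rewrite sub0r normrN ltr0_norm.
- by move=> *; rewrite addrC addKr ger0_norm.
Qed.

Lemma hpm_stepE n d (U : 'M[R]_(n, d)) y l (x : 'cV[R]_d) i :
  hpm_step U y l x i 0 = softr ((x - U^T *m (U *m x - y)) i 0) l.
Proof. by rewrite mxE. Qed.

Section Recovery.
Variables (n d s : nat) (U : 'M[R]_(n, d)) (xs : 'cV[R]_d).
Hypothesis xs_sparse : (#|supp xs| <= s)%N.

Lemma restr_residual_le ds th (x : 'cV[R]_d) (T : {set 'I_d}) :
  rip_ok U s ds -> roc_ok U s th ->
  (#|supp x :\: supp xs| <= s)%N -> (#|T| <= s)%N -> [disjoint T & supp xs] ->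
  norm2 (restr T ((x - xs) - U^T *m (U *m (x - xs))))
    <= (ds + Num.sqrt 2 * th) * norm2 (x - xs).
Proof.
move=> rip roc x_off Ts dTS.
have ds_ge0 : 0 <= ds by case: rip.
have th_ge0 : 0 <= th by case: roc.
set S := supp xs in x_off dTS *; set e := x - xs.
set P := supp x :\: S :\: T.
have dTP : [disjoint T & P] by rewrite disjoint_sym disjoints_subset subsetDr.
have dSP : [disjoint S & P].
  by rewrite disjoint_sym disjoints_subset (subset_trans (subsetDl _ _) (subsetDr _ _)).
have dTS_P : [disjoint T :|: S & P] by rewrite disjoints_subset subUset -!disjoints_subset dTP.
have Ps : (#|P| <= s)%N by apply: leq_trans (subset_leq_card (subsetDl _ _)) x_off.
have e_split : e = restr T e + restr S e + restr P e.
  rewrite -!restrU // restr_id //; apply: subset_trans (suppB_subset x xs) _.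
  by apply/subsetP => i; rewrite !inE; case: (i \in T); case: (xs i 0 != 0).
set r := restr T (e - U^T *m (U *m e)).
have sr : supp r \subset T by apply: supp_restr.
have r_sqr : norm2 r ^+ 2 = (dotv r (restr T e) - dotv (U *m r) (U *m restr T e))
    - dotv (U *m r) (U *m restr S e) - dotv (U *m r) (U *m restr P e).
  rewrite sqr_norm2 -dotv_restr -/r dotvBr dotv_trmx.
  rewrite {1 2}e_split !mulmxDr !dotvDr.
  rewrite (dotv_disjoint_supp sr (supp_restr _ _) dTS).
  by rewrite (dotv_disjoint_supp sr (supp_restr _ _) dTP); ring.
have bT := rip_ok_dotv rip Ts sr (supp_restr T e).
have bS := roc_ok_dotv roc Ts xs_sparse dTS sr (supp_restr S e).
have bP := roc_ok_dotv roc Ts Ps dTP sr (supp_restr P e).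
have r_le : norm2 r <= ds * norm2 (restr T e) + th * (norm2 (restr S e) + norm2 (restr P e)).
  apply: ler_of_sqr_le_mul; rewrite ?(norm2_ge0, addr_ge0, mulr_ge0) //.
  move: bT bS bP; rewrite r_sqr !ler_norml => /andP[_ ?] /andP[? _] /andP[? _].
  by lra.
apply: le_trans r_le _; rewrite mulrDl (mulrC (Num.sqrt 2)) -mulrA lerD ?ler_wpM2l //.
- exact: norm2_restr_le.
- exact: norm2_restrD_le.
Qed.

Lemma card_offsupp_hpm_step_le ds th l (x : 'cV[R]_d) :
  (0 < s)%N -> rip_ok U s ds -> roc_ok U s th ->
  (#|supp x :\: supp xs| <= s)%N ->
  (ds + Num.sqrt 2 * th) * norm2 (x - xs) <= l * Num.sqrt s%:R ->
  (#|supp (hpm_step U (U *m xs) l x) :\: supp xs| <= s)%N.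
Proof.
move=> s_gt0 rip roc x_off err_le.
have c_ge0 : 0 <= ds + Num.sqrt 2 * th.
  by case: rip => ? _; case: roc => ? _; rewrite addr_ge0 ?mulr_ge0 ?sqrtr_ge0.
have sqrts_gt0 : 0 < Num.sqrt (s%:R : R) by rewrite sqrtr_gt0 ltr0n.
have l_ge0 : 0 <= l.
  by rewrite -(pmulr_lge0 _ sqrts_gt0) (le_trans _ err_le) ?mulr_ge0 ?norm2_ge0.
set S := supp xs in x_off *; set xh := x - U^T *m (U *m x - U *m xs).
set w := (x - xs) - U^T *m (U *m (x - xs)).
have w_off i : i \notin S -> w i 0 = xh i 0.
  rewrite inE negbK => /eqP xs_i0.
  by rewrite /w /xh -mulmxBr !mxE xs_i0; ring.
set L := [set i | (i \notin S) && (l < `|xh i 0|)].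
have suppL : supp (hpm_step U (U *m xs) l x) :\: S \subset L.
  apply/subsetP => i; rewrite in_setD => /andP[iS]; rewrite inE hpm_stepE => nz.
  by rewrite inE iS softr_neq0.
apply: leq_trans (subset_leq_card suppL) _; rewrite leqNgt; apply/negP => /ltnW.
move=> /subset_of_card[T TL Ts].
have T_off i : i \in T -> (i \notin S) && (l < `|xh i 0|).
  by move=> /(subsetP TL); rewrite inE.
have dTS : [disjoint T & S].
  by rewrite disjoints_subset; apply/subsetP => i /T_off /andP[? _]; rewrite inE.
have wT_le := restr_residual_le rip roc x_off (eq_leq Ts) dTS.
have wT_gt : s%:R * l ^+ 2 < sqnorm (restr T w).
  rewrite sqnorm_restr -Ts mulr_natl -sumr_const; apply: ltr_sum.
    have /card_gt0P[i iT] : (0 < #|T|)%N by rewrite Ts.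
    by apply/hasP; exists i; rewrite ?mem_index_enum.
  move=> i /T_off /andP[iS l_lt]; rewrite w_off // -[xh i 0 ^+ 2]real_normK ?num_real //.
  by rewrite ltr_pXn2r ?nnegrE ?normr_ge0.
have : norm2 (restr T w) <= l * Num.sqrt s%:R := le_trans wT_le err_le.
rewrite -ler_sqr ?nnegrE ?norm2_ge0 ?mulr_ge0 ?sqrtr_ge0 // sqr_norm2.
by rewrite exprMn sqr_sqrtr ?ler0n // mulrC leNgt wT_gt.
Qed.

Lemma hpm_step_err_le ds3 l (x : 'cV[R]_d) :
  0 <= l -> rip_ok U (3 * s) ds3 ->
  (#|supp x :\: supp xs| <= s)%N ->
  (#|supp (hpm_step U (U *m xs) l x) :\: supp xs| <= s)%N ->
  norm2 (hpm_step U (U *m xs) l x - xs) <= ds3 * norm2 (x - xs) + l * Num.sqrt s%:R.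
Proof.
move=> l_ge0 rip3 x_off x'_off.
have ds3_ge0 : 0 <= ds3 by case: rip3.
set x' := hpm_step U (U *m xs) l x in x'_off *; set S := supp xs in x_off x'_off *.
set xh := x - U^T *m (U *m x - U *m xs).
set e := x - xs; set e' := x' - xs.
set W := S :|: (supp x :\: S) :|: (supp x' :\: S).
have Ws : (#|W| <= 3 * s)%N.
  have cardU (A B : {set 'I_d}) : (#|A :|: B| <= #|A| + #|B|)%N := leq_card_setU A B.
  rewrite /W; apply: leq_trans (cardU _ _) _; have := cardU S (supp x :\: S).
  by move: xs_sparse x_off x'_off; rewrite -/S; lia.
have se : supp e \subset W by apply: subset_trans (suppB_subset x xs) (subsetUl _ _).
have se' : supp e' \subset W.
  apply: subset_trans (suppB_subset x' xs) _.
  by rewrite subUset subsetUr andbT (subset_trans (subsetUl _ _) (subsetUl _ _)).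
have e'_split : dotv e' e' = (dotv e' e - dotv (U *m e') (U *m e)) + dotv e' (x' - xh).
  have -> : x' - xh = e' - (e - U^T *m (U *m e)).
    by rewrite /e /e' /xh !mulmxBr; apply/matrixP => i j; rewrite !mxE; ring.
  by rewrite (dotvBr e' (e - _)) (dotvBr e) dotv_trmx; ring.
have thresh_le : dotv e' (x' - xh) <= l * \sum_(i in S) `|e' i 0|.
  rewrite /dotv mulr_sumr [X in _ <= X]big_mkcond; apply: ler_sum => i _.
  rewrite [(x' - xh) i 0]mxE [x' i 0]hpm_stepE -/xh.
  case: ifPn => iS.
    apply: le_trans (ler_norm _) _; rewrite normrM mulrC ler_wpM2r //.
    by rewrite [(- xh) i 0]mxE softr_sub_le.
  move: iS; rewrite inE negbK => /eqP xs_i0.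
  by rewrite /e' mxE [(- xs) i 0]mxE xs_i0 subr0 hpm_stepE [(- xh) i 0]mxE softr_mul_sub_le0.
have sum_le : \sum_(i in S) `|e' i 0| <= Num.sqrt s%:R * norm2 e'.
  apply: le_trans (sum_abs_le_sqrt_card S e') _.
  by rewrite ler_wpM2r ?norm2_ge0 // ler_sqrt ?ler0n // ler_nat.
have bil := rip_ok_dotv rip3 Ws se' se.
apply: ler_of_sqr_le_mul; rewrite ?(norm2_ge0, addr_ge0, mulr_ge0, sqrtr_ge0) //.
rewrite sqr_norm2 sqnormE e'_split.
move: bil; rewrite ler_norml => /andP[_ bil].
by have := ler_wpM2l l_ge0 sum_le; lra.
Qed.

Lemma hpm_step_contract ds th ds3 D l (x : 'cV[R]_d) :
  (0 < s)%N -> rip_ok U s ds -> roc_ok U s th -> rip_ok U (3 * s) ds3 ->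
  (#|supp x :\: supp xs| <= s)%N -> norm2 (x - xs) <= D ->
  l = (ds + Num.sqrt 2 * th) / Num.sqrt s%:R * D ->
  (#|supp (hpm_step U (U *m xs) l x) :\: supp xs| <= s)%N /\
  norm2 (hpm_step U (U *m xs) l x - xs) <= (ds + Num.sqrt 2 * th + ds3) * D.
Proof.
move=> s_gt0 rip roc rip3 x_off err_le_D l_def.
have c_ge0 : 0 <= ds + Num.sqrt 2 * th.
  by case: rip => ? _; case: roc => ? _; rewrite addr_ge0 ?mulr_ge0 ?sqrtr_ge0.
have ds3_ge0 : 0 <= ds3 by case: rip3.
have sqrts_gt0 : 0 < Num.sqrt (s%:R : R) by rewrite sqrtr_gt0 ltr0n.
have l_sqrts : l * Num.sqrt s%:R = (ds + Num.sqrt 2 * th) * D.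
  by rewrite l_def; field; rewrite gt_eqF.
have D_ge0 : 0 <= D := le_trans (norm2_ge0 _) err_le_D.
have l_ge0 : 0 <= l by rewrite l_def !mulr_ge0 // invr_ge0 ltW.
have x'_off : (#|supp (hpm_step U (U *m xs) l x) :\: supp xs| <= s)%N.
  by apply: card_offsupp_hpm_step_le rip roc x_off _; rewrite // l_sqrts ler_wpM2l.
split=> //; apply: le_trans (hpm_step_err_le l_ge0 rip3 x_off x'_off) _.
by rewrite l_sqrts; have := ler_wpM2l ds3_ge0 err_le_D; lra.
Qed.

End Recovery.

End Vectors.

Theorem theorem1 (R : realType) (n d s : nat) (U : 'M[R]_(n, d))
  (xs : 'cV[R]_d) (y : 'cV[R]_n)
  (delta_s theta_ss delta_3s : R) (Delta lam : nat -> R) :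
  (0 < s)%N -> (2 * s <= d)%N ->
  (#|supp xs| <= s)%N ->
  y = U *m xs ->
  is_RIC U s delta_s -> is_ROC U s theta_ss -> is_RIC U (3 * s) delta_3s ->
  delta_s + Num.sqrt 2 * theta_ss + delta_3s < 1 ->
  norm2 (hpm U y lam 1 - xs) <= Delta 1%N ->
  (forall t, (1 <= t)%N ->
     Delta t.+1 = (delta_s + Num.sqrt 2 * theta_ss + delta_3s) * Delta t) ->
  (forall t, (1 <= t)%N ->
     lam t = (delta_s + Num.sqrt 2 * theta_ss) / Num.sqrt s%:R * Delta t) ->
  forall t : nat,
    (#|supp (hpm U y lam t.+1) :\: supp xs| <= s)%N /\
    norm2 (hpm U y lam t.+1 - xs)
      <= (delta_s + Num.sqrt 2 * theta_ss + delta_3s) ^+ t * Delta 1%N.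
Proof.
move=> s_gt0 _ xs_sparse -> [rip _] [roc _] [rip3 _] _ err1 Delta_next lam_def.
set g := delta_s + Num.sqrt 2 * theta_ss + delta_3s.
suff: forall t, [/\ (#|supp (hpm U (U *m xs) lam t.+1) :\: supp xs| <= s)%N,
    norm2 (hpm U (U *m xs) lam t.+1 - xs) <= Delta t.+1 &
    Delta t.+1 = g ^+ t * Delta 1%N].
  by move=> inv t; have [? ? <-] := inv t.
elim=> [|t [x_off err_le Delta_t]].
  split; rewrite ?expr0 ?mul1r //.
  have -> : supp (hpm U (U *m xs) lam 1) = set0 by apply/setP => i; rewrite !inE mxE eqxx.
  by rewrite set0D cards0.
have [x'_off err'_le] := hpm_step_contract xs_sparse s_gt0 rip roc rip3 x_off err_le
  (lam_def t.+1 isT).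
by split; rewrite // Delta_next // Delta_t exprS mulrA.
Qed.
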